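(* For all $n\ge1$, $u_{2n}(0)=\dfrac{n+1}{2^n}$.
   Context: The rational functions $u_{2n}(a)$ are defined by $(a^2+1)u_2=1$ and, for $n\ge2$, $(a^2+n^2)u_{2n}=3u_{2(n-1)}+3\sum_{j_1+j_2=n-1}u_{2j_1}u_{2j_2}+\sum_{j_1+j_2+j_3=n-1}u_{2j_1}u_{2j_2}u_{2j_3}-\sum_{1\le j_1,\,2j_1<n}(n-2j_1)^2u_{2j_1}u_{2(n-j_1)}$, all indices $j_i\ge1$. They are the Taylor coefficients of the solution of the degenerate third Painlevé equation vanishing at $\tau=0$. *)

From HB Require Import structures.
From mathcomp Require Import all_boot all_order all_algebra.
Set Implicit Arguments. Unset Strict Implicit. Unset Printing Implicit Defensive.
Import Order.TTheory GRing.Theory Num.Theory.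
Local Open Scope ring_scope.

(* Taylor coefficients u_{2n}(a) of the degenerate PIII solution, evaluated
   pointwise at a : R (R a real field, so a^2 + n^2 <> 0 for n >= 1). *)
Section U.
Variable R : realFieldType.
Variable a : R.

(* given s = [:: u_2; u_4; ...; u_{2(n-1)}], [uu s j] is u_{2j} for j >= 1 *)
Definition uu (s : seq R) (j : nat) : R := nth 0 s j.-1.

Definition u_rhs (s : seq R) (n : nat) : R :=
  3 * uu s n.-1
  + 3 * (\sum_(1 <= j1 < n.-1) uu s j1 * uu s (n.-1 - j1))
  + (\sum_(1 <= j1 < n.-1) \sum_(1 <= j2 < n.-1 - j1)
        uu s j1 * uu s j2 * uu s (n.-1 - j1 - j2))
  - (\sum_(1 <= j1 < n | (2 * j1 < n)%N)
        ((n - 2 * j1)%:R) ^+ 2 * uu s j1 * uu s (n - j1)).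

Definition u_next (s : seq R) (n : nat) : R :=
  if n == 1%N then (a ^+ 2 + 1)^-1
  else u_rhs s n / (a ^+ 2 + (n%:R) ^+ 2).

(* useq n = [:: u_2; ...; u_{2n}] *)
Fixpoint useq (n : nat) : seq R :=
  match n with
  | 0 => [::]
  | m.+1 => rcons (useq m) (u_next (useq m) m.+1)
  end.

(* u n = u_{2n}(a), for n >= 1 *)
Definition u (n : nat) : R := nth 0 (useq n) n.-1.
End U.

From HB Require Import structures.
From mathcomp Require Import all_boot all_order all_algebra.
From mathcomp Require Import ring zify.
Import Order.TTheory GRing.Theory Num.Theory.
Local Open Scope ring_scope.

(* Under this ansatz
   every sum in the recursion is 2^-n times a sum of a polynomial in the
   summation index, evaluated in closed form by telescoping (the discrete
   antiderivatives were found by interpolation).  The one-sided sum over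
   2j < n is half the full sum over 0 < j < n: its summand is symmetric under
   j -> n - j and the weight (n - 2j)^2 kills the middle term.  The recursion
   then reduces to a polynomial identity in n. *)

Section PolynomialSums.
Variable R : numFieldType.
Implicit Types N n : nat.

Lemma sum_conv2 N : (0 < N)%N ->
  \sum_(1 <= j < N) j.+1%:R * (N - j).+1%:R
    = (N%:R - 1) * (N%:R + 1) * (N%:R + 6) / 6 :> R.
Proof.
move=> N_gt0.
pose A k : R := k%:R * (k%:R + 1) * (3 * N%:R + 5 - 2 * k%:R) / 6.
rewrite (telescope_sumr_eq A) // => [|k /andP[_ lt_kN]]; rewrite /A.
  by field.
by rewrite -[k.+1%:R]natr1 -[(N - k).+1%:R]natr1 (natrB _ (ltnW lt_kN)); field.
Qed.

Lemma sum_conv3 N : (0 < N)%N ->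
  \sum_(1 <= i < N) \sum_(1 <= j < N - i) i.+1%:R * j.+1%:R * (N - i - j).+1%:R
    = (N%:R - 2) * (N%:R - 1) * (N%:R + 1) * (N%:R + 5) * (N%:R + 12) / 120 :> R.
Proof.
move=> N_gt0.
have inner i : (i < N)%N ->
    \sum_(1 <= j < N - i) i.+1%:R * j.+1%:R * (N - i - j).+1%:R
    = i.+1%:R * (((N - i)%:R - 1) * ((N - i)%:R + 1) * ((N - i)%:R + 6) / 6) :> R.
  move=> lt_iN; rewrite -sum_conv2 ?subn_gt0 // mulr_sumr.
  by apply: eq_bigr => j _; rewrite mulrA.
under eq_big_nat => i /andP[_ lt_iN] do rewrite inner //.
pose A k : R := k%:R * (k%:R + 1) * (- 46 + 80 * N%:R + 80 * N%:R ^+ 2 + 10 * N%:R ^+ 3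
  - (49 + 105 * N%:R + 20 * N%:R ^+ 2) * k%:R + (39 + 15 * N%:R) * k%:R ^+ 2
  - 4 * k%:R ^+ 3) / 120.
rewrite (telescope_sumr_eq A) // => [|k /andP[_ lt_kN]]; rewrite /A.
  by field.
by rewrite -[k.+1%:R]natr1 (natrB _ (ltnW lt_kN)); field.
Qed.

Lemma sum_sqr_dist n :
  \sum_(1 <= j < n) (n%:R - 2 * j%:R) ^+ 2 * (j.+1%:R * (n - j).+1%:R)
    = n%:R * (n%:R - 2) * (n%:R - 1) * (n%:R + 1) * (n%:R + 12) / 30 :> R.
Proof.
case: n => [|n]; first by rewrite big_geq // !mul0r.
pose A k : R := k%:R * (k%:R + 1) * (24 + 80 * n.+1%:R + 65 * n.+1%:R ^+ 2
  + 15 * n.+1%:R ^+ 3 - (84 + 140 * n.+1%:R + 50 * n.+1%:R ^+ 2) * k%:R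
  + (84 + 60 * n.+1%:R) * k%:R ^+ 2 - 24 * k%:R ^+ 3) / 30.
rewrite (telescope_sumr_eq A) // => [|k /andP[_ lt_kn]]; rewrite /A.
  by field.
by rewrite -[k.+1%:R]natr1 -[(n.+1 - k).+1%:R]natr1 (natrB _ (ltnW lt_kn)); field.
Qed.

End PolynomialSums.

Lemma sum_half_symmetric (V : zmodType) n (F : nat -> V) :
  (forall j, (j <= n)%N -> F (n - j)%N = F j) ->
  (forall j, (2 * j)%N = n -> F j = 0) ->
  (\sum_(1 <= j < n | (2 * j < n)%N) F j) *+ 2 = \sum_(1 <= j < n) F j.
Proof.
move=> F_sym F_mid.
rewrite mulr2n [RHS](bigID (fun j => (2 * j < n)%N)) /=; congr (_ + _).
rewrite [RHS](bigID (fun j => (2 * j == n)%N)) /= [X in _ = X + _]big1 ?add0r; last first.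
  by move=> j /andP[_ /eqP]; apply: F_mid.
rewrite big_nat_rev /= big_nat_cond [RHS]big_nat_cond.
apply: eq_big => [j|j /andP[/andP[_ lt_jn] _]]; rewrite add1n subSS.
  by apply/idP/idP => /andP[/andP[j_gt0 lt_jn] j_half]; rewrite j_gt0 lt_jn /=; lia.
exact: F_sym (ltnW lt_jn).
Qed.

Section ClosedForm.
Variable R : numFieldType.
Implicit Types N n : nat.

Definition u0 n : R := n.+1%:R / 2 ^+ n.

Lemma sum_u0_conv2 N : (0 < N)%N ->
  \sum_(1 <= j < N) u0 j * u0 (N - j)
    = (N%:R - 1) * (N%:R + 1) * (N%:R + 6) / 6 / 2 ^+ N.
Proof.
move=> N_gt0; rewrite -sum_conv2 // mulr_suml.
apply: eq_big_nat => j /andP[_ lt_jN].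
rewrite /u0 -[in 2 ^+ N](subnKC (ltnW lt_jN)) exprD.
by rewrite invfM mulrACA.
Qed.

Lemma sum_u0_conv3 N : (0 < N)%N ->
  \sum_(1 <= i < N) \sum_(1 <= j < N - i) u0 i * u0 j * u0 (N - i - j)
    = (N%:R - 2) * (N%:R - 1) * (N%:R + 1) * (N%:R + 5) * (N%:R + 12) / 120 / 2 ^+ N.
Proof.
move=> N_gt0; rewrite -sum_conv3 // mulr_suml.
apply: eq_big_nat => i /andP[_ lt_iN]; rewrite mulr_suml.
apply: eq_big_nat => j /andP[_ lt_j_Ni].
rewrite /u0 -[in 2 ^+ N](subnKC (ltnW lt_iN)) exprD.
by rewrite -[in 2 ^+ (N - i)](subnKC (ltnW lt_j_Ni)) exprD !invfM; ring.
Qed.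

Lemma sum_u0_half_sqr_dist n :
  \sum_(1 <= j < n | (2 * j < n)%N) (n - 2 * j)%:R ^+ 2 * u0 j * u0 (n - j)
    = n%:R * (n%:R - 2) * (n%:R - 1) * (n%:R + 1) * (n%:R + 12) / 60 / 2 ^+ n.
Proof.
pose F j := (n%:R - 2 * j%:R) ^+ 2 * (u0 j * u0 (n - j)).
have F_sym j : (j <= n)%N -> F (n - j)%N = F j.
  by move=> le_jn; rewrite /F subKn // natrB //; ring.
have F_mid j : (2 * j)%N = n -> F j = 0.
  by move=> mid; rewrite /F -mid natrM subrr expr2 !mul0r.
have sum_F : \sum_(1 <= j < n) F j
    = n%:R * (n%:R - 2) * (n%:R - 1) * (n%:R + 1) * (n%:R + 12) / 30 / 2 ^+ n.
  rewrite -sum_sqr_dist mulr_suml; apply: eq_big_nat => j /andP[_ lt_jn].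
  by rewrite /F /u0 -[in 2 ^+ n](subnKC (ltnW lt_jn)) exprD invfM; ring.
rewrite big_nat_cond (eq_bigr F); last first.
  move=> j /andP[_ lt_2j_n].
  by rewrite /F (natrB _ (ltnW lt_2j_n)) natrM -mulrA.
rewrite -big_nat_cond; apply: (@mulIf _ 2); first by rewrite pnatr_eq0.
rewrite [LHS]mulr_natr sum_half_symmetric // sum_F.
by field; rewrite expf_eq0 pnatr_eq0 andbF.
Qed.

End ClosedForm.

Section RecursionAtZero.
Variable R : realFieldType.
Implicit Types (s : seq R) (N n : nat).

Lemma u_rhs_u0 s N : (0 < N)%N ->
  (forall j, (0 < j <= N)%N -> uu s j = u0 R j) ->
  u_rhs s N.+1 = N.+1%:R ^+ 2 * u0 R N.+1.
Proof.
move=> N_gt0 s_u0; rewrite /u_rhs /= s_u0; last by rewrite N_gt0 leqnn.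
have -> : \sum_(1 <= j < N) uu s j * uu s (N - j)
    = \sum_(1 <= j < N) u0 R j * u0 R (N - j).
  by apply: eq_big_nat => j j_range; rewrite !s_u0 //; lia.
have -> : \sum_(1 <= i < N) \sum_(1 <= j < N - i) uu s i * uu s j * uu s (N - i - j)
    = \sum_(1 <= i < N) \sum_(1 <= j < N - i) u0 R i * u0 R j * u0 R (N - i - j).
  apply: eq_big_nat => i i_range; apply: eq_big_nat => j j_range.
  by rewrite !s_u0 //; lia.
have -> : \sum_(1 <= j < N.+1 | (2 * j < N.+1)%N)
      (N.+1 - 2 * j)%:R ^+ 2 * uu s j * uu s (N.+1 - j)
    = \sum_(1 <= j < N.+1 | (2 * j < N.+1)%N)
      (N.+1 - 2 * j)%:R ^+ 2 * u0 R j * u0 R (N.+1 - j).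
  rewrite big_nat_cond [RHS]big_nat_cond.
  by apply: eq_bigr => j /andP[j_range _]; rewrite !s_u0 //; lia.
rewrite sum_u0_conv2 // sum_u0_conv3 // sum_u0_half_sqr_dist /u0.
rewrite -[N.+2%:R]natr1 -[N.+1%:R]natr1 exprS.
by field; rewrite expf_eq0 pnatr_eq0 andbF.
Qed.

Lemma u_next_u0 s n : (0 < n)%N ->
  (forall j, (0 < j < n)%N -> uu s j = u0 R j) -> u_next 0 s n = u0 R n.
Proof.
case: n => [//|[_ _|N _ s_u0]]; rewrite /u_next /=.
  by rewrite /u0 expr0n add0r invr1 expr1 divff // pnatr_eq0.
rewrite u_rhs_u0 // expr0n add0r mulrC mulKf //.
by rewrite expf_eq0 pnatr_eq0.
Qed.

Lemma uu_iota_u0 n j : (0 < j <= n)%N ->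
  uu [seq u0 R i | i <- iota 1 n] j = u0 R j.
Proof.
case/andP=> j_gt0 le_jn; rewrite /uu (nth_map 0%N) ?size_iota; last by lia.
by rewrite nth_iota ?add1n ?prednK //; lia.
Qed.

Lemma useq_u0 n : useq (0 : R) n = [seq u0 R j | j <- iota 1 n].
Proof.
elim: n => [//|n IHn].
have -> : iota 1 n.+1 = rcons (iota 1 n) n.+1.
  by rewrite -cats1 -[n.+1]addn1 iotaD add1n addn1.
rewrite map_rcons -IHn /=; congr rcons.
by apply: u_next_u0 => // j lt_jn; rewrite IHn uu_iota_u0 //; lia.
Qed.

End RecursionAtZero.

Theorem proposition10 (R : realFieldType) (n : nat) :
  (1 <= n)%N -> u (0 : R) n = (n.+1)%:R / 2 ^+ n.
Proof.
move=> n_gt0; rewrite /u useq_u0.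
by apply: uu_iota_u0; rewrite n_gt0 leqnn.
Qed.
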